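(* Work in the projective model of $\mathbf{Sol}$ geometry described in the context. Let $P_1=(1,0,0,0)$, $P_2=(1,a,b,c)$ with $a,b,c\in\mathbb{R}$, and $\sigma\in\mathbb{R}^+$. The translation-like Apollonius surface $\mathcal{AS}^\sigma_{P_1P_2}$ (the set of points $P=(1,x,y,z)$ with $\sigma\, d^t(P_1,P)=d^t(P,P_2)$) is given by the following implicit equations. (1) If $c\neq0$: for $z\neq0,c$: \[\frac{|c-z|}{|e^{c}-e^z|}\sqrt{(a-x)^2e^{2(c+z)}+(e^{c}-e^{z})^2+(b-y)^2}=\sigma\frac{|z|}{|e^{z}-1|}\sqrt{x^2e^{2z}+(e^{z}-1)^2+y^2};\] for $z=c$: \[\sqrt{(x-a)^2e^{2c}+(y-b)^2e^{-2c}}=\sigma\frac{|z|}{|e^{z}-1|}\sqrt{x^2e^{2z}+(e^{z}-1)^2+y^2};\] for $z=0$: \[\frac{|c|}{|e^{c}-1|}\sqrt{(a-x)^2e^{2c}+(e^{c}-1)^2+(b-y)^2}=\sigma\sqrt{x^2+y^2}.\] (2) If $c=0$: for $z\neq0$: \[\frac{|z|}{|e^z-1|}\sqrt{(a-x)^2e^{2z}+(e^{z}-1)^2+(b-y)^2}=\sigma\frac{|z|}{|e^{z}-1|}\sqrt{x^2e^{2z}+(e^{z}-1)^2+y^2};\] for $z=0$: \[\sqrt{(x-a)^2+(y-b)^2}=\sigma\sqrt{x^2+y^2}.\]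
   Context: $\mathbf{Sol}$ is modelled on $\mathbb{R}^3$ with points in homogeneous coordinates $(1,x,y,z)$. For $Q=(1,q_1,q_2,q_3)$ the translation $\mathbf{T}_Q$ acts on row vectors from the right by the matrix $\begin{pmatrix}1&q_1&q_2&q_3\\0&e^{-q_3}&0&0\\0&0&e^{q_3}&0\\0&0&0&1\end{pmatrix}$, i.e. $(1,a,b,c)\mapsto(1,q_1+ae^{-q_3},q_2+be^{q_3},q_3+c)$; it maps $E_0=(1,0,0,0)$ to $Q$. A translation curve starting at $E_0$ with unit initial tangent $(u,v,w)=(\cos\theta\cos\phi,\cos\theta\sin\phi,\sin\theta)$ solves $\dot x=ue^{-z},\ \dot y=ve^{z},\ \dot z=w$ from the origin: $x(t)=-\frac uw(e^{-wt}-1)$, $y(t)=\frac vw(e^{wt}-1)$, $z(t)=wt$ if $w\ne0$, and $x=ut,y=vt,z=0$ if $w=0$. Translation curves from $Q$ are the $\mathbf{T}_Q$-images of these. The translation distance $d^t(Q,P)$ is the length (parameter $t$) of the translation curve segment from $Q$ to $P$; equivalently $d^t(Q,P)=d^t(E_0,\mathbf{T}_Q^{-1}(P))$. For $\sigma\in\mathbb{R}^+$, the translation-like Apollonius surface of $P_1,P_2$ with parameter $\sigma$ is $\{P:\sigma\, d^t(P_1,P)=d^t(P,P_2)\}$. *)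

From Stdlib Require Import Reals Lra.
Open Scope R_scope.

(* A point (1,x,y,z) of Sol in homogeneous coordinates is represented by
   its affine part (x,y,z). *)
Definition pt := (R * R * R)%type.

Definition transl (Q P : pt) : pt :=
  let '(q1, q2, q3) := Q in
  let '(a, b, c) := P in
  (q1 + a * exp (- q3), q2 + b * exp q3, q3 + c).

(* Translation curve from E0 with unit initial tangent (u,v,w), at parameter t. *)
Definition tcurve (u v w t : R) : pt :=
  if Req_EM_T w 0 then (u * t, v * t, 0)
  else (- (u / w) * (exp (- (w * t)) - 1), (v / w) * (exp (w * t) - 1), w * t).

(* [tdist Q P t] : the translation curve segment from Q to P has length
   (parameter) t, i.e. d^t(Q,P) = t.  Translation curves from Q are the
   T_Q-images of the translation curves from E0. *)
Definition tdist (Q P : pt) (t : R) : Prop :=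
  0 <= t /\
  exists u v w : R, u ^ 2 + v ^ 2 + w ^ 2 = 1 /\ transl Q (tcurve u v w t) = P.

Definition apollonius (P1 P2 : pt) (sigma : R) (P : pt) : Prop :=
  exists t1 t2 : R, tdist P1 P t1 /\ tdist P P2 t2 /\ sigma * t1 = t2.

From Stdlib Require Import Reals Lra Psatz.
Open Scope R_scope.

(* Along the translation curve with initial velocity (u,v,w), the point (X,Y,Z) reached at
   time t satisfies g(Z) sqrt(X^2 e^(2Z) + (e^Z - 1)^2 + Y^2) = |t| |(u,v,w)|, where
   g(Z) = Z/(e^Z - 1) and g(0) = 1; conversely (X,Y,Z) is reached at time t > 0 with velocity
   (X e^Z g(Z), Y g(Z), Z)/t.  So d^t(E0,P) is this closed form [tnorm P].  Since
   d^t(P,P2) = d^t(E0, T_P^-1 P2), the Apollonius condition reads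
   sigma tnorm P = tnorm (T_P^-1 P2), and the cases of the statement only unfold g and the
   factor e^(-z) that T_P^-1 introduces. *)

Definition origin : pt := (0, 0, 0).

Definition z_div_expm1 (Z : R) : R :=
  if Req_EM_T Z 0 then 1 else Z / (exp Z - 1).

Definition tnorm (P : pt) : R :=
  let '(X, Y, Z) := P in
  z_div_expm1 Z * sqrt (X ^ 2 * exp (2 * Z) + (exp Z - 1) ^ 2 + Y ^ 2).

Lemma exp_double u : exp (2 * u) = exp u ^ 2.
Proof. replace (2 * u) with (u + u) by ring; rewrite exp_plus; ring. Qed.

Lemma expm1_neq0 Z : Z <> 0 -> exp Z - 1 <> 0.
Proof. intros HZ HE; apply HZ, exp_inv; rewrite exp_0; lra. Qed.

Lemma z_div_expm1_pos Z : 0 < z_div_expm1 Z.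
Proof.
  unfold z_div_expm1; destruct (Req_EM_T Z 0) as [_ | HZ]; [lra |].
  rewrite <- exp_0.
  destruct (Rtotal_order Z 0) as [Hlt | [Heq | Hgt]]; [| contradiction |].
  - pose proof (exp_increasing _ _ Hlt).
    replace (Z / (exp Z - exp 0)) with (- Z / (exp 0 - exp Z)) by (field; lra).
    apply Rdiv_lt_0_compat; lra.
  - pose proof (exp_increasing _ _ Hgt); apply Rdiv_lt_0_compat; lra.
Qed.

Lemma z_div_expm1_mul Z : z_div_expm1 Z * (exp Z - 1) = Z.
Proof.
  unfold z_div_expm1; destruct (Req_EM_T Z 0) as [-> | HZ].
  - rewrite exp_0; ring.
  - field; exact (expm1_neq0 Z HZ).
Qed.

Lemma z_div_expm1_abs Z : Z <> 0 -> z_div_expm1 Z = Rabs Z / Rabs (exp Z - 1).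
Proof.
  intro HZ; pose proof (Rabs_no_R0 _ (expm1_neq0 Z HZ)).
  assert (Habs : Rabs Z = z_div_expm1 Z * Rabs (exp Z - 1)).
  { rewrite <- (Rabs_pos_eq (z_div_expm1 Z)) by apply Rlt_le, z_div_expm1_pos.
    now rewrite <- Rabs_mult, z_div_expm1_mul. }
  rewrite Habs; field; assumption.
Qed.

Lemma tnorm_0 X Y : tnorm (X, Y, 0) = sqrt (X ^ 2 + Y ^ 2).
Proof.
  unfold tnorm, z_div_expm1; destruct (Req_EM_T 0 0) as [_ | ]; [| lra].
  rewrite Rmult_0_r, exp_0, Rmult_1_l; f_equal; ring.
Qed.

Lemma tnorm_neq0 X Y Z : Z <> 0 ->
  tnorm (X, Y, Z) =
  Rabs Z / Rabs (exp Z - 1) * sqrt (X ^ 2 * exp (2 * Z) + (exp Z - 1) ^ 2 + Y ^ 2).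
Proof. intro HZ; unfold tnorm; now rewrite z_div_expm1_abs. Qed.

Lemma tnorm_ge0 P : 0 <= tnorm P.
Proof.
  destruct P as [[X Y] Z]; apply Rmult_le_pos; [apply Rlt_le, z_div_expm1_pos | apply sqrt_pos].
Qed.

Lemma tnorm_radicand_ge0 X Y Z : 0 <= X ^ 2 * exp (2 * Z) + (exp Z - 1) ^ 2 + Y ^ 2.
Proof.
  pose proof (pow2_ge_0 X); pose proof (pow2_ge_0 Y); pose proof (pow2_ge_0 (exp Z - 1)).
  pose proof (exp_pos (2 * Z)); nra.
Qed.

Lemma tnorm_eq0 P : tnorm P = 0 -> P = origin.
Proof.
  destruct P as [[X Y] Z]; unfold tnorm; intro H0.
  pose proof (z_div_expm1_pos Z); pose proof (exp_pos Z).
  assert (HS : X ^ 2 * exp (2 * Z) + (exp Z - 1) ^ 2 + Y ^ 2 = 0).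
  { apply sqrt_eq_0; [apply tnorm_radicand_ge0 |].
    destruct (Rmult_integral _ _ H0); [lra | assumption]. }
  rewrite exp_double in HS.
  pose proof (pow2_ge_0 Y); pose proof (pow2_ge_0 (exp Z - 1)).
  assert (0 <= X ^ 2 * exp Z ^ 2) by (apply Rmult_le_pos; apply pow2_ge_0).
  assert (HXE : X ^ 2 * exp Z ^ 2 = 0) by lra.
  assert (HY : Y = 0) by nra.
  assert (HE : exp Z = 1) by nra.
  assert (HX : X = 0) by (rewrite HE in HXE; nra).
  assert (HZ : Z = 0) by (apply exp_inv; now rewrite exp_0).
  now subst.
Qed.

Lemma sqrt_sq_mul s n : sqrt (s ^ 2 * n) = Rabs s * sqrt n.
Proof. rewrite sqrt_mult_alt by apply pow2_ge_0; now rewrite <- Rsqr_pow2, sqrt_Rsqr_abs. Qed.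

Lemma tnorm_tcurve u v w t :
  tnorm (tcurve u v w t) = Rabs t * sqrt (u ^ 2 + v ^ 2 + w ^ 2).
Proof.
  unfold tcurve; destruct (Req_EM_T w 0) as [-> | Hw].
  - rewrite tnorm_0, <- sqrt_sq_mul; f_equal; ring.
  - cbn [tnorm]; set (Z := w * t).
    pose proof (exp_pos Z).
    assert (Hrad : (- (u / w) * (exp (- Z) - 1)) ^ 2 * exp (2 * Z) + (exp Z - 1) ^ 2
                   + (v / w * (exp Z - 1)) ^ 2
                   = ((exp Z - 1) / w) ^ 2 * (u ^ 2 + v ^ 2 + w ^ 2)).
    { rewrite exp_double, exp_Ropp; field; lra. }
    rewrite Hrad, sqrt_sq_mul, <- Rmult_assoc; f_equal.
    rewrite <- (Rabs_pos_eq (z_div_expm1 Z)) by apply Rlt_le, z_div_expm1_pos.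
    rewrite <- Rabs_mult.
    replace (z_div_expm1 Z * ((exp Z - 1) / w)) with (z_div_expm1 Z * (exp Z - 1) / w)
      by (field; exact Hw).
    rewrite z_div_expm1_mul; unfold Z; f_equal; field; exact Hw.
Qed.

Lemma tcurve_reaches X Y Z t : 0 < t ->
  tcurve (X * exp Z * z_div_expm1 Z / t) (Y * z_div_expm1 Z / t) (Z / t) t = (X, Y, Z).
Proof.
  intro Ht; assert (HZ : Z / t * t = Z) by (field; lra).
  unfold tcurve; destruct (Req_EM_T (Z / t) 0) as [HZt | HZt].
  - assert (Z = 0) as -> by (rewrite <- HZ, HZt; ring).
    unfold z_div_expm1; destruct (Req_EM_T 0 0) as [_ |]; [| lra].
    rewrite exp_0; f_equal; f_equal; field; lra.
  - assert (HZ0 : Z <> 0) by (intro; apply HZt; subst; unfold Rdiv; ring).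
    pose proof (expm1_neq0 Z HZ0); pose proof (exp_pos Z).
    rewrite HZ, exp_Ropp; unfold z_div_expm1; destruct (Req_EM_T Z 0) as [|_]; [contradiction |].
    f_equal; f_equal; field; repeat split; lra.
Qed.

Lemma transl_origin P : transl origin P = P.
Proof.
  destruct P as [[p q] r]; cbn; rewrite Ropp_0, exp_0; f_equal; [f_equal |]; ring.
Qed.

Lemma tdist_origin_iff P t : tdist origin P t <-> t = tnorm P.
Proof.
  unfold tdist; setoid_rewrite transl_origin; split.
  - intros [Ht [u [v [w [Hunit <-]]]]].
    now rewrite tnorm_tcurve, Hunit, sqrt_1, Rmult_1_r, Rabs_pos_eq.
  - intros ->; split; [apply tnorm_ge0 |].
    destruct (Rle_lt_or_eq_dec _ _ (tnorm_ge0 P)) as [Hpos | H0].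
    + destruct P as [[X Y] Z]; set (t := tnorm (X, Y, Z)) in *.
      exists (X * exp Z * z_div_expm1 Z / t), (Y * z_div_expm1 Z / t), (Z / t).
      split; [| now apply tcurve_reaches].
      pose proof (tnorm_tcurve (X * exp Z * z_div_expm1 Z / t) (Y * z_div_expm1 Z / t) (Z / t) t)
        as Hnorm.
      rewrite tcurve_reaches, Rabs_pos_eq in Hnorm by lra; fold t in Hnorm.
      set (n := _ + _ + _) in Hnorm |- *.
      assert (Hsqrt : sqrt n = 1) by (apply (Rmult_eq_reg_l t); lra).
      rewrite <- (pow2_sqrt n), Hsqrt by (unfold n; nra); ring.
    + rewrite <- H0, (tnorm_eq0 P (eq_sym H0)).
      exists 1, 0, 0; split; [ring |].
      unfold tcurve; destruct (Req_EM_T 0 0) as [_ |]; [| lra].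
      unfold origin; f_equal; f_equal; ring.
Qed.

Definition transl_inv (Q P : pt) : pt :=
  let '(q1, q2, q3) := Q in
  let '(a, b, c) := P in
  ((a - q1) * exp q3, (b - q2) * exp (- q3), c - q3).

Lemma transl_eq_iff Q R P : transl Q R = P <-> R = transl_inv Q P.
Proof.
  destruct Q as [[q1 q2] q3], R as [[r1 r2] r3], P as [[a b] c]; cbn.
  pose proof (exp_pos q3); rewrite exp_Ropp.
  split; intro Heq; injection Heq; intros; subst; f_equal; f_equal; field; lra.
Qed.

Lemma tdist_transl_inv Q P t : tdist Q P t <-> tdist origin (transl_inv Q P) t.
Proof.
  unfold tdist; setoid_rewrite transl_origin; setoid_rewrite transl_eq_iff; reflexivity.
Qed.

Lemma apollonius_origin_iff P2 sigma P :
  apollonius origin P2 sigma P <-> sigma * tnorm P = tnorm (transl_inv P P2).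
Proof.
  unfold apollonius; setoid_rewrite (tdist_transl_inv P); setoid_rewrite tdist_origin_iff.
  split.
  - now intros [t1 [t2 [-> [-> H]]]].
  - intro H; now exists (tnorm P), (tnorm (transl_inv P P2)).
Qed.

Lemma tnorm_transl_inv_neq x y z a b c : z <> c ->
  tnorm (transl_inv (x, y, z) (a, b, c)) =
  Rabs (c - z) / Rabs (exp c - exp z) *
    sqrt ((a - x) ^ 2 * exp (2 * (c + z)) + (exp c - exp z) ^ 2 + (b - y) ^ 2).
Proof.
  intro Hzc; cbn [transl_inv]; rewrite tnorm_neq0 by lra.
  pose proof (exp_pos (- z)); pose proof (exp_pos z).
  assert (Hcz : exp c - exp z <> 0) by (intro; apply Hzc, exp_inv; lra).
  assert (Hshift : exp (c - z) = exp c * exp (- z)) by (rewrite <- exp_plus; f_equal; ring).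
  replace (exp (c - z) - 1) with ((exp c - exp z) * exp (- z))
    by (rewrite Hshift, exp_Ropp; field; lra).
  rewrite !exp_double, Hshift, exp_plus.
  set (K := _ + _ + (b - y) ^ 2).
  replace (_ + _ + ((b - y) * exp (- z)) ^ 2) with (exp (- z) ^ 2 * K)
    by (unfold K; rewrite exp_Ropp; field; lra).
  rewrite sqrt_sq_mul, Rabs_mult, (Rabs_pos_eq (exp (- z))) by lra.
  field; split; [now apply Rabs_no_R0 | lra].
Qed.

Lemma tnorm_transl_inv_eq x y a b c :
  tnorm (transl_inv (x, y, c) (a, b, c)) =
  sqrt ((x - a) ^ 2 * exp (2 * c) + (y - b) ^ 2 * exp (- (2 * c))).
Proof.
  cbn [transl_inv]; rewrite Rminus_diag, tnorm_0.
  replace (- (2 * c)) with (2 * - c) by ring.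
  rewrite !exp_double; f_equal; ring.
Qed.
Theorem lemma3p6 (a b c sigma : R) (hs : 0 < sigma) (x y z : R) :
  let AS := apollonius (0, 0, 0) (a, b, c) sigma (x, y, z) in
  (* (1) c <> 0 *)
  (c <> 0 -> z <> 0 -> z <> c ->
     (AS <->
      Rabs (c - z) / Rabs (exp c - exp z) *
        sqrt ((a - x) ^ 2 * exp (2 * (c + z)) + (exp c - exp z) ^ 2 + (b - y) ^ 2)
      = sigma * (Rabs z / Rabs (exp z - 1)) *
        sqrt (x ^ 2 * exp (2 * z) + (exp z - 1) ^ 2 + y ^ 2))) /\
  (c <> 0 -> z = c ->
     (AS <->
      sqrt ((x - a) ^ 2 * exp (2 * c) + (y - b) ^ 2 * exp (- (2 * c)))
      = sigma * (Rabs z / Rabs (exp z - 1)) *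
        sqrt (x ^ 2 * exp (2 * z) + (exp z - 1) ^ 2 + y ^ 2))) /\
  (c <> 0 -> z = 0 ->
     (AS <->
      Rabs c / Rabs (exp c - 1) *
        sqrt ((a - x) ^ 2 * exp (2 * c) + (exp c - 1) ^ 2 + (b - y) ^ 2)
      = sigma * sqrt (x ^ 2 + y ^ 2))) /\
  (* (2) c = 0 *)
  (c = 0 -> z <> 0 ->
     (AS <->
      Rabs z / Rabs (exp z - 1) *
        sqrt ((a - x) ^ 2 * exp (2 * z) + (exp z - 1) ^ 2 + (b - y) ^ 2)
      = sigma * (Rabs z / Rabs (exp z - 1)) *
        sqrt (x ^ 2 * exp (2 * z) + (exp z - 1) ^ 2 + y ^ 2))) /\
  (c = 0 -> z = 0 ->
     (AS <->
      sqrt ((x - a) ^ 2 + (y - b) ^ 2) = sigma * sqrt (x ^ 2 + y ^ 2))).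
Proof.
  cbv zeta; change (0, 0, 0) with origin; rewrite apollonius_origin_iff.
  split; [| split; [| split; [| split]]].
  - intros Hc Hz Hzc; rewrite tnorm_transl_inv_neq, tnorm_neq0 by auto.
    split; intro; lra.
  - intros Hc ->; rewrite tnorm_transl_inv_eq, tnorm_neq0 by auto.
    split; intro; lra.
  - intros Hc ->; rewrite tnorm_transl_inv_neq, tnorm_0 by auto.
    rewrite Rminus_0_r, Rplus_0_r, exp_0; split; intro; lra.
  - intros -> Hz; rewrite tnorm_transl_inv_neq, tnorm_neq0 by auto.
    rewrite Rplus_0_l, exp_0, Rabs_minus_sym, Rminus_0_l, Rabs_Ropp, (Rabs_minus_sym 1).
    replace ((1 - exp z) ^ 2) with ((exp z - 1) ^ 2) by ring.
    split; intro; lra.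
  - intros -> ->; rewrite tnorm_transl_inv_eq, tnorm_0.
    rewrite Rmult_0_r, Ropp_0, exp_0, !Rmult_1_r; split; intro; lra.
Qed.
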